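(* Let $d\ge2$, $j\in[d-1]$, $j\le k\le d$, $R$ an abelian group, and let $M=(K,C)$ be a copy of $M_{j,k}$ in a simplicial complex $\mathcal G$ on $[n]$. Let $f$ be a $j$-cochain of $\mathcal G$ with coefficients in $R$ whose support is contained in the flower $\mathcal F(K,C)$. Then: (i) $f$ is a $j$-cocycle if and only if $f=f_{M,r}$ for some $r\in R$; (ii) if there exist $w\in K\setminus C$ and $a\in[n]\setminus K$ such that $(K,C,w,a)$ is a copy of $\hat M_{j,k}$ in $\mathcal G$, then $f$ is a $j$-cocycle but not a $j$-coboundary if and only if $f=f_{M,r}$ for some $r\in R\setminus\{0_R\}$.
   Context: Cochains: a $j$-cochain is a function $f$ from ordered $j$-simplices $[v_0,\dots,v_j]$ of $\mathcal G$ to $R$ with $f(\sigma)=-f(\sigma')$ when $\sigma'$ is obtained by swapping two vertices; its support is the set of unordered $j$-simplices with nonzero value. The coboundary is $(\delta^jf)([v_0,\dots,v_{j+1}])=\sum_{i=0}^{j+1}(-1)^if([v_0,\dots,\hat v_i,\dots,v_{j+1}])$; $j$-cocycles are elements of $\ker\delta^j$, $j$-coboundaries elements of $\operatorname{im}\delta^{j-1}$. Flowers: for a $k$-simplex $K$ and $C\subset K$ with $|C|=j$, $\mathcal F(K,C)=\{C\cup\{w\}\mid w\in K\setminus C\}$ (its elements are petals). A $(j+2)$-set is a $j$-shell if all its $(j+1)$-subsets are $j$-simplices. Copies: for $j+1\le k\le d$, $(K,C)$ is a copy of $M_{j,k}$ if $K$ is a $k$-simplex of $\mathcal G$ and $C\subset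 K$, $|C|=j$, such that every simplex of $\mathcal G$ containing a petal of $\mathcal F(K,C)$ is contained in $K$; $(K,C)$ is a copy of $M_{j,j}$ if $K$ is an isolated $j$-simplex (in no other simplex of $\mathcal G$) and $C$ is the set of first $j$ vertices of $K$ in increasing order. $(K,C,w,a)$ is a copy of $\hat M_{j,k}$ ($j+1\le k\le d$) if $(K,C)$ is a copy of $M_{j,k}$, $w\in K\setminus C$, $a\in[n]\setminus K$ and $C\cup\{w,a\}$ is a $j$-shell; for $k=j$, $(K,C,w,a)$ is a copy of $\hat M_{j,j}$ if $(K,C)$ is a copy of $M_{j,j}$, $w$ is the last vertex of $K$ in increasing order, $a\notin K$ and $K\cup\{a\}$ is a $j$-shell. $f_{M,r}$: let $v_0,\dots,v_{n-1}$ be the ordering of $[n]$ with $C=\{v_0,\dots,v_{j-1}\}$, $K=\{v_0,\dots,v_k\}$, and vertices within $C$, within $K\setminus C$ and within $[n]\setminus K$ in increasing order. For $r\in R$, $f_{M,r}([v_{i_0},\dots,v_{i_j}])$ with $i_0<\dots<i_j$ equals $r$ if $i_s=s$ for $0\le s\le j-1$ and $j\le i_j\le k$, and $0_R$ otherwise, extended to all orderings alternatingly. *)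

From mathcomp Require Import all_boot all_order all_algebra.
Set Implicit Arguments. Unset Strict Implicit. Unset Printing Implicit Defensive.
Import Order.TTheory GRing.Theory Num.Theory.
Local Open Scope ring_scope.

Section Defs.
Variable n : nat.
Implicit Types (G : {set {set 'I_n}}) (K C S : {set 'I_n}) (s : seq 'I_n).

Definition is_complex G : Prop :=
  [/\ set0 \notin G,
      (forall A B : {set 'I_n}, A \in G -> B \subset A -> B != set0 -> B \in G)
    & (forall v : 'I_n, [set v] \in G)].

Definition is_osimplex G (m : nat) s : bool :=
  [&& size s == m.+1, uniq s & [set x in s] \in G].

Definition del (i : nat) s : seq 'I_n := take i s ++ drop i.+1 s.

Definition swap s (a b : nat) : seq 'I_n :=
  [seq nth p.1 s (if p.2 == a then b else if p.2 == b then a else p.2)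
  | p <- zip s (iota 0 (size s))].

Variable R : zmodType.

Definition is_cochain G (m : nat) (f : seq 'I_n -> R) : Prop :=
  (forall s, ~~ is_osimplex G m s -> f s = 0) /\
  (forall s (a b : nat), is_osimplex G m s -> (a < b < size s)%N ->
     f (swap s a b) = - f s).

Definition coboundary G (m : nat) (f : seq 'I_n -> R) (s : seq 'I_n) : R :=
  if is_osimplex G m.+1 s then \sum_(i < m.+2) f (del i s) *~ ((-1) ^+ i)
  else 0.

Definition is_cocycle G (m : nat) (f : seq 'I_n -> R) : Prop :=
  is_cochain G m f /\ forall s, coboundary G m f s = 0.

(* m-coboundary (m >= 1): image of delta^(m-1) *)
Definition is_coboundary G (m : nat) (f : seq 'I_n -> R) : Prop :=
  exists g, is_cochain G m.-1 g /\ forall s, f s = coboundary G m.-1 g s.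

Definition support_in (f : seq 'I_n -> R) (F : {set {set 'I_n}}) : Prop :=
  forall s, f s != 0 -> [set x in s] \in F.

Definition flower K C : {set {set 'I_n}} := [set C :|: [set w] | w in K :\: C].

Definition shell G (j : nat) S : bool :=
  (#|S| == j.+2) &&
  [forall T : {set 'I_n}, ((T \subset S) && (#|T| == j.+1)) ==> (T \in G)].

Definition copyM G (j k : nat) K C : Prop :=
  ((j < k)%N /\ K \in G /\ #|K| = k.+1 /\ C \subset K /\ #|C| = j /\
    forall P sigma, P \in flower K C -> sigma \in G -> P \subset sigma ->
      sigma \subset K)
  \/
  (k = j /\ K \in G /\ #|K| = j.+1 /\
    (forall sigma, sigma \in G -> K \subset sigma -> sigma = K) /\
    C \subset K /\ #|C| = j /\
    (forall c x, c \in C -> x \in K :\: C -> (c < x)%N)).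

Definition copyMhat G (j k : nat) K C (w a : 'I_n) : Prop :=
  ((j < k)%N /\ copyM G j k K C /\ w \in K :\: C /\ a \notin K /\
    shell G j (C :|: [set w; a]))
  \/
  (k = j /\ copyM G j k K C /\
    w \in K /\ (forall x, x \in K -> (x <= w)%N) /\
    a \notin K /\ shell G j (K :|: [set a])).

(* position of x in the ordering v_0,...,v_{n-1}: C first, then K \ C,
   then [n] \ K, each block in increasing order *)
Definition vpos K C (x : 'I_n) : nat :=
  if x \in C then #|[set y in C | (y < x)%N]|
  else if x \in K then (#|C| + #|[set y in K :\: C | (y < x)%N]|)%N
  else (#|K| + #|[set y in ~: K | (y < x)%N]|)%N.

Definition ninv (l : seq nat) : nat :=
  (\sum_(a < size l) \sum_(b < size l | (a < b)%N) (nth 0 l b < nth 0 l a))%N.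

(* f_{M,r}: on an ordered j-simplex [v_{i_0},...] (in any order), with
   sorted indices i_0 < ... < i_j, value r if i_s = s (s < j) and
   j <= i_j <= k, extended alternatingly (sign of the sorting permutation);
   0 otherwise. *)
Definition fM G (j k : nat) K C (r : R) (s : seq 'I_n) : R :=
  if is_osimplex G j s then
    let l := map (vpos K C) s in
    let ls := sort leq l in
    if [forall t : 'I_j, nth 0 ls t == t] && (j <= nth 0 ls j <= k)%N
    then r *~ ((-1) ^+ ninv l)
    else 0
  else 0.

End Defs.

(* Order the vertices as v_0, ..., v_{n-1} (C first, then K \ C, then the rest).
   A j-cochain and f_{M,r} both change sign under a transposition of adjacent
   entries, so they coincide as soon as they agree on increasing simplices. An
   increasing j-simplex whose vertex set is a petal is [v_0, ..., v_{j-1}, w],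
   so a cochain supported on the flower is determined by the values
   r_w = f[v_0, ..., v_{j-1}, w]. If f is a cocycle, its coboundary on
   [v_0, ..., v_{j-1}, w, w'] is +-(r_w' - r_w), so all r_w are equal.
   Conversely, every (j+1)-simplex containing a petal lies in K, so the
   coboundary of f_{M,r} can only be nonzero on simplices with vertex set
   C + {w, w'}, where it is +-(r - r) = 0. Finally, if C + {w, a} is a j-shell,
   the alternating sum of a coboundary over its faces vanishes, while for
   f_{M,r} it equals +-r because the face C + {a} is not a petal. *)

From mathcomp Require Import all_boot all_algebra perm zify.
Set Implicit Arguments. Unset Strict Implicit. Unset Printing Implicit Defensive.
Import GRing.Theory.

Section SwapNext.
Variable T : Type.
Implicit Types (s : seq T) (i : nat).

Fixpoint swap_next i s : seq T :=
  match i, s with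
  | 0, x :: y :: t => y :: x :: t
  | i'.+1, x :: t => x :: swap_next i' t
  | _, _ => s
  end.

Lemma swap_next_nil i : swap_next i [::] = [::].
Proof. by case: i. Qed.

Lemma swap_nextS i x s : swap_next i.+1 (x :: s) = x :: swap_next i s.
Proof. by []. Qed.

Lemma size_swap_next i s : size (swap_next i s) = size s.
Proof. by elim: s i => [|x s IH] [|i] //=; [case: s {IH} | rewrite IH]. Qed.

Lemma nth_swap_next x0 i s p : i.+1 < size s ->
  nth x0 (swap_next i s) p =
  nth x0 s (if p == i then i.+1 else if p == i.+1 then i else p).
Proof.
elim: s i p => [|x s IH] [|i] p //=; first by case: s {IH} => [|y t] // _; case: p => [|[]].
by move=> Hi; case: p => [|p] //=; rewrite IH // !eqSS; case: (p == i); case: (p == i.+1).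
Qed.

End SwapNext.

Lemma map_swap_next (T U : Type) (h : T -> U) i s :
  map h (swap_next i s) = swap_next i (map h s).
Proof. by elim: s i => [|x s IH] [|i] //=; [case: s {IH} | rewrite IH]. Qed.

Lemma perm_swap_next (T : eqType) i (s : seq T) : perm_eq (swap_next i s) s.
Proof.
elim: s i => [|x s IH] [|i] //=; last by rewrite perm_cons.
by case: s {IH} => [|y t] //=; rewrite (perm_catCA [:: y] [:: x]).
Qed.

Lemma ninv_nil : ninv [::] = 0.
Proof. by rewrite /ninv big_ord0. Qed.

Lemma ninv_cons x l : ninv (x :: l) = (count (fun y => y < x) l + ninv l)%N.
Proof.
rewrite /ninv /= big_ord_recl /=; congr (_ + _)%N.
  rewrite big_mkcond big_ord_recl /= add0n.
  by elim: l => [|y l IH]; rewrite ?big_ord0 //= big_ord_recl /= IH.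
apply: eq_bigr => a _; rewrite big_mkcond big_ord_recl /= add0n [RHS]big_mkcond.
exact: eq_bigr.
Qed.

Lemma ninv_swap_next l i : i.+1 < size l ->
  (ninv (swap_next i l) + (nth 0 l i.+1 < nth 0 l i) =
   ninv l + (nth 0 l i < nth 0 l i.+1))%N.
Proof.
elim: l i => [|x l IH] [|i] //; first by case: l {IH} => [|y t] // _; rewrite /= !ninv_cons /=; lia.
move=> Hi; rewrite /= !ninv_cons (seq.permP (perm_swap_next i l)) -addnA IH //.
by rewrite addnA.
Qed.

Lemma ninv_sorted l : sorted leq l -> ninv l = 0.
Proof.
elim: l => [|x l IH] Hl; first exact: ninv_nil.
rewrite ninv_cons IH ?(path_sorted Hl) // addn0; apply/eqP; rewrite -leqn0 leqNgt -has_count.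
apply/hasPn => y yl; rewrite -leqNgt.
exact: (allP (order_path_min leq_trans Hl)).
Qed.

Lemma exists_descent (l : seq nat) : ~~ sorted leq l ->
  exists2 i, i.+1 < size l & nth 0 l i.+1 < nth 0 l i.
Proof.
elim: l => [|x [|y l] IH] //=; case: leqP => [_ /IH [i Hi Hd] | Hyx _].
  by exists i.+1.
by exists 0.
Qed.

Lemma alternating_eq_sorted (T : Type) (V : zmodType) (key : T -> nat)
    (P : seq T -> bool) (f g : seq T -> V) :
  (forall i s, P (swap_next i s) = P s) ->
  (forall i s, P s -> i.+1 < size s -> (f (swap_next i s) = - f s)%R) ->
  (forall i s, P s -> i.+1 < size s -> (g (swap_next i s) = - g s)%R) ->
  (forall s, P s -> sorted leq (map key s) -> f s = g s) ->
  forall s, P s -> f s = g s.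
Proof.
move=> Pswap fswap gswap fg_sorted s.
have [N] := ubnP (ninv (map key s)); elim: N s => // N IH s HN Ps.
have [|/exists_descent[i]] := boolP (sorted leq (map key s)); first exact: fg_sorted.
rewrite size_map => Hi Hd.
apply: oppr_inj; rewrite -(fswap i) // -(gswap i) //; apply: IH; rewrite ?Pswap //.
have := @ninv_swap_next (map key s) i; rewrite size_map => /(_ Hi).
rewrite Hd ltnNge (ltnW Hd) map_swap_next; lia.
Qed.

Section Deletion.
Variable n : nat.
Implicit Types (s t : seq 'I_n) (x : 'I_n).

Lemma del0 x s : del 0 (x :: s) = s.
Proof. by rewrite /del /= drop0. Qed.

Lemma delS i x s : del i.+1 (x :: s) = x :: del i s.
Proof. by []. Qed.

Lemma del_nil i : del i ([::] : seq 'I_n) = [::].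
Proof. by case: i. Qed.

Lemma size_del i s : i < size s -> size (del i s) = (size s).-1.
Proof.
elim: s i => [|x s IH] [|i] // Hi; first by rewrite del0.
by rewrite delS /= IH //; move: Hi => /=; case: (size s).
Qed.

Lemma del_subseq i s : subseq (del i s) s.
Proof.
rewrite /del -{3}(cat_take_drop i s) cat_subseq // -add1n -drop_drop.
exact: drop_subseq.
Qed.

Lemma nth_notin_del x0 i s : uniq s -> i < size s -> nth x0 s i \notin del i s.
Proof.
move=> + Hi; rewrite -{1}(cat_take_drop i s) (drop_nth x0 Hi) /del.
by rewrite cat_uniq /= mem_cat !negb_or => /and4P[_ /andP[-> _] -> _].
Qed.

Lemma del_del i l t : i <= l -> del l (del i t) = del i (del l.+1 t).
Proof.
elim: t i l => [|x t IH] i l; first by rewrite !del_nil.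
case: i => [|i] Hil; first by rewrite del0 delS del0.
by case: l Hil => [|l] // Hil; rewrite !delS IH.
Qed.

Lemma del_swap_next_lt l i s : l < i -> del l (swap_next i s) = swap_next i.-1 (del l s).
Proof.
elim: s l i => [|x s IH] l [|i] //; first by rewrite ?swap_next_nil del_nil ?swap_next_nil.
case: l => [|l] Hl; first by rewrite del0 /= del0.
by case: i Hl => [|i] // Hl; rewrite swap_nextS !delS IH.
Qed.

Lemma del_swap_next_gt l i s : i.+1 < l -> del l (swap_next i s) = swap_next i (del l s).
Proof.
elim: s l i => [|x s IH] [|l] i //; first by rewrite ?swap_next_nil del_nil ?swap_next_nil.
case: i => [|i] Hl; last by case: l Hl => [|l] // Hl; rewrite swap_nextS !delS swap_nextS IH.
by case: s {IH} => [|y t]; [rewrite delS del_nil | case: l Hl => [|[|l]]].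
Qed.

Lemma del_swap_next i s : i.+1 < size s ->
  del i (swap_next i s) = del i.+1 s /\ del i.+1 (swap_next i s) = del i s.
Proof.
elim: s i => [|x s IH] [|i] //.
  by case: s {IH} => [|y t] // _; rewrite [swap_next _ _]/= !delS !del0.
by move=> /IH [E1 E2]; rewrite swap_nextS !delS E1 E2.
Qed.

Lemma del_size_cat s x t : del (size s) (s ++ x :: t) = s ++ t.
Proof. by elim: s => [|y s IH]; rewrite ?del0 //= delS IH. Qed.

Lemma swap_succE s i : i.+1 < size s -> swap s i i.+1 = swap_next i s.
Proof.
case: s => [|x0 s'] // Hi; set s := x0 :: s' in Hi *.
apply: (@eq_from_nth _ x0); first by rewrite size_map size_zip size_iota minnn size_swap_next.
move=> p; rewrite size_map size_zip size_iota minnn => Hp.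
rewrite (nth_map (x0, 0)) ?size_zip ?size_iota ?minnn // nth_zip ?size_iota //.
rewrite nth_iota // add0n /= nth_swap_next //; apply: set_nth_default.
by case: eqP => _; [|case: eqP => _] => //; exact: ltnW.
Qed.

End Deletion.

Lemma mulrz_signS (V : zmodType) (x : V) m :
  (x *~ ((-1) ^+ m.+1) = - (x *~ ((-1) ^+ m)))%R.
Proof. by rewrite exprS mulN1r mulrNz. Qed.

Lemma mulrz_sign_eq0 (V : zmodType) (x : V) m : (x *~ ((-1) ^+ m) == 0)%R = (x == 0)%R.
Proof.
by rewrite -signr_odd; case: (odd m); rewrite ?expr0 ?expr1 ?mulr1z ?mulrN1z ?oppr_eq0.
Qed.

(* Deleting entry [i] then entry [l] removes the same two entries as the pair
   [del_partner (i, l)], whose index sum has the other parity. *)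
Definition del_partner m (p : 'I_m.+2 * 'I_m.+1) : 'I_m.+2 * 'I_m.+1 :=
  if p.1 <= p.2 then (inord p.2.+1, inord p.1) else (inord p.2, inord p.1.-1).

Lemma del_partner_le m (p : 'I_m.+2 * 'I_m.+1) : p.1 <= p.2 ->
  (del_partner p).1 = p.2.+1 :> nat /\ (del_partner p).2 = p.1 :> nat.
Proof.
move=> H; rewrite /del_partner H /=.
by have := ltn_ord p.1; have := ltn_ord p.2; move=> ? ?; rewrite !inordK //; lia.
Qed.

Lemma del_partner_gt m (p : 'I_m.+2 * 'I_m.+1) : ~~ (p.1 <= p.2) ->
  (del_partner p).1 = p.2 :> nat /\ (del_partner p).2 = p.1.-1 :> nat.
Proof.
move=> H; rewrite /del_partner (negbTE H) /=.
by have := ltn_ord p.1; have := ltn_ord p.2; move=> ? ?; rewrite !inordK //; lia.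
Qed.

Lemma del_partner_leN m (p : 'I_m.+2 * 'I_m.+1) :
  ~~ ((del_partner p).1 <= (del_partner p).2) = (p.1 <= p.2).
Proof.
have [H|H] := boolP (p.1 <= p.2).
  by have [-> ->] := del_partner_le H; rewrite -ltnNge ltnS.
by have [-> ->] := del_partner_gt H; move: H; rewrite -ltnNge; lia.
Qed.

Lemma del_partnerK m : involutive (@del_partner m).
Proof.
move=> p; have [H|H] := boolP (p.1 <= p.2).
  have [E1 E2] := del_partner_le H.
  have H' : ~~ ((del_partner p).1 <= (del_partner p).2) by rewrite del_partner_leN.
  have [F1 F2] := del_partner_gt H'.
  by apply: injective_projections; apply: val_inj => /=; rewrite ?F1 ?F2 ?E1 ?E2.
have [E1 E2] := del_partner_gt H.
have H' : (del_partner p).1 <= (del_partner p).2 by rewrite E1 E2; move: H; rewrite -ltnNge; lia.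
have [F1 F2] := del_partner_le H'.
apply: injective_projections; apply: val_inj => /=; rewrite ?F1 ?F2 ?E1 ?E2 //=.
by move: H; rewrite -ltnNge; lia.
Qed.

Lemma alternating_sum_del_del n (V : zmodType) (g : seq 'I_n -> V) t m :
  (\sum_(i < m.+2) (\sum_(l < m.+1) g (del l (del i t)) *~ ((-1) ^+ l)) *~ ((-1) ^+ i))%R
  = 0%R.
Proof.
under eq_bigr do rewrite mulrz_suml.
rewrite pair_bigA /= (bigID (fun p : 'I_m.+2 * 'I_m.+1 => p.1 <= p.2)) /=.
rewrite [X in (_ + X)%R](reindex_inj (can_inj (@del_partnerK m))) /=.
apply/eqP; rewrite addr_eq0 -sumrN; apply/eqP.
apply: eq_big => p; first by rewrite del_partner_leN.
move=> H; have [-> ->] := del_partner_le H.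
by rewrite del_del // mulrz_signS opprK mulrzAC.
Qed.

Section Cochains.
Variables (n : nat) (G : {set {set 'I_n}}).
Implicit Types (s t : seq 'I_n) (m : nat).

Lemma osimplex_swap_next m i s : is_osimplex G m (swap_next i s) = is_osimplex G m s.
Proof.
rewrite /is_osimplex size_swap_next (perm_uniq (perm_swap_next i s)).
by congr [&& _, _ & _ \in G]; apply/setP => x; rewrite !inE (perm_mem (perm_swap_next i s)).
Qed.

Lemma cochain_swap_next (V : zmodType) m (f : seq 'I_n -> V) i s :
  is_cochain G m f -> is_osimplex G m s -> i.+1 < size s ->
  f (swap_next i s) = (- f s)%R.
Proof. by move=> [_ Hf] Hs Hi; rewrite -swap_succE // Hf // ltnSn. Qed.

Lemma is_coboundary0 (V : zmodType) m (f : seq 'I_n -> V) :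
  f =1 (fun=> 0%R) -> is_coboundary G m f.
Proof.
move=> f0; exists (fun=> 0%R); split; first by split=> // *; rewrite oppr0.
move=> s; rewrite f0 /coboundary; case: ifP => // _.
by rewrite big1 // => i _; rewrite mul0rz.
Qed.

(* [t] need not be a simplex of [G]: this is applied to shells. *)
Lemma alternating_sum_coboundary_faces (V : zmodType) (g : seq 'I_n -> V) t m :
  (forall i : 'I_m.+3, is_osimplex G m.+1 (del i t)) ->
  (\sum_(i < m.+3) coboundary G m g (del i t) *~ ((-1) ^+ i))%R = 0%R.
Proof.
move=> faces; rewrite -[RHS](alternating_sum_del_del g t m.+1).
by apply: eq_bigr => i _; rewrite /coboundary faces.
Qed.

Hypothesis complexG : is_complex G.

Lemma osimplex_sub m s (A : {set 'I_n}) : A \in G -> size s = m.+1 -> uniq s ->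
  {subset s <= A} -> is_osimplex G m s.
Proof.
case: complexG => _ down _ AG Hs Hu sA; rewrite /is_osimplex Hs eqxx Hu.
apply: (down A) => //; first by apply/subsetP => x; rewrite inE; apply: sA.
by case: s Hs {Hu sA} => // x s _; apply/set0Pn; exists x; rewrite inE mem_head.
Qed.

Lemma osimplex_del m s i : is_osimplex G m.+1 s -> i < m.+2 -> is_osimplex G m (del i s).
Proof.
case/and3P => /eqP Hs Hu sG Hi; apply: (osimplex_sub sG).
- by rewrite size_del Hs.
- exact: subseq_uniq (del_subseq i s) Hu.
- by move=> x /(mem_subseq (del_subseq i s)); rewrite inE.
Qed.

Lemma coboundary_swap_next (V : zmodType) m (f : seq 'I_n -> V) s i :
  is_cochain G m f -> i.+1 < size s ->
  coboundary G m f (swap_next i s) = (- coboundary G m f s)%R.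
Proof.
move=> Hf Hi; rewrite /coboundary osimplex_swap_next.
case: ifP => Hs; last by rewrite oppr0.
have Hsz : size s = m.+2 by case/and3P: Hs => /eqP.
have [E1 E2] := del_swap_next Hi; rewrite Hsz in Hi.
pose a : 'I_m.+2 := Ordinal (ltnW Hi); pose b : 'I_m.+2 := Ordinal Hi.
rewrite (reindex_inj (@perm_inj _ (tperm a b))) /= -sumrN; apply: eq_bigr => l _.
have [->|la] := eqVneq l a; first by rewrite tpermL /= E2 mulrz_signS.
have [->|lb] := eqVneq l b; first by rewrite tpermR /= E1 mulrz_signS opprK.
rewrite tpermD 1?eq_sym //.
have Hds := osimplex_del Hs (ltn_ord l).
have Hdsz : size (del l s) = m.+1 by rewrite size_del Hsz.
have [Hli|Hil|Eli] := ltngtP l i.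
- rewrite del_swap_next_lt // (cochain_swap_next Hf Hds) ?mulNrz // Hdsz.
  by rewrite prednK // (leq_ltn_trans _ Hli).
- have lb' : l != i.+1 :> nat by apply: contraNneq lb => E; apply/eqP/val_inj.
  rewrite del_swap_next_gt; last by lia.
  by rewrite (cochain_swap_next Hf Hds) ?mulNrz // Hdsz; have := ltn_ord l; lia.
- by move: la; rewrite -val_eqE /= Eli eqxx.
Qed.

End Cochains.

Section VertexOrder.
Variables (n : nat) (K C : {set 'I_n}).
Hypothesis subCK : C \subset K.
Implicit Types x y : 'I_n.

Lemma card_lower_lt (A : {set 'I_n}) x : x \in A -> #|[set y in A | y < x]| < #|A|.
Proof.
move=> xA; apply: proper_card; apply/properP.
by split; [apply/subsetP => y; rewrite inE => /andP[] | exists x; rewrite // inE ltnn andbF].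
Qed.

Lemma vpos_ltC x : (vpos K C x < #|C|) = (x \in C).
Proof.
rewrite /vpos; case: ifP => xC; first exact: card_lower_lt.
apply/negbTE; rewrite -leqNgt; case: ifP => _; first exact: leq_addr.
exact: leq_trans (subset_leq_card subCK) (leq_addr _ _).
Qed.

Lemma vpos_ltK x : (vpos K C x < #|K|) = (x \in K).
Proof.
rewrite /vpos; case: ifP => xC.
  by rewrite (subsetP subCK x xC) (leq_trans (card_lower_lt xC)) ?subset_leq_card.
case: ifP => xK; last by apply/negbTE; rewrite -leqNgt leq_addr.
have xKC : x \in K :\: C by rewrite inE xC xK.
have -> : #|K| = (#|C| + #|K :\: C|)%N by rewrite cardsD (setIidPr subCK) subnKC ?subset_leq_card.
by rewrite ltn_add2l card_lower_lt.
Qed.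

Lemma vpos_geC x : x \notin C -> #|C| <= vpos K C x.
Proof. by rewrite leqNgt vpos_ltC. Qed.

Lemma vpos_lt_block x y : x < y -> (x \in C) = (y \in C) -> (x \in K) = (y \in K) ->
  vpos K C x < vpos K C y.
Proof.
move=> xy eC eK; rewrite /vpos eC eK.
have card_lt (A : {set 'I_n}) : x \in A -> y \in A ->
    #|[set z in A | z < x]| < #|[set z in A | z < y]|.
  move=> xA yA; apply: proper_card; apply/properP; split; last first.
    by exists x; rewrite !inE ?xA ?yA ?xy ?ltnn ?andbF.
  by apply/subsetP => z; rewrite !inE => /andP[-> /= /ltn_trans]; apply.
case: ifP => yC; first by apply: card_lt; rewrite ?eC.
by case: ifP => yK; rewrite ltn_add2l; apply: card_lt; rewrite !inE ?eC ?eK ?yC ?yK.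
Qed.

Lemma vpos_inj : injective (vpos K C).
Proof.
move=> x y Exy; have eC : (x \in C) = (y \in C) by rewrite -!vpos_ltC Exy.
have eK : (x \in K) = (y \in K) by rewrite -!vpos_ltK Exy.
case: (ltngtP x y) => [xy|yx|/val_inj //].
  by have := vpos_lt_block xy eC eK; rewrite Exy ltnn.
by have := vpos_lt_block yx (esym eC) (esym eK); rewrite Exy ltnn.
Qed.

End VertexOrder.

Section CanonicalOrder.
Variables (n j : nat) (K C : {set 'I_n}).
Hypotheses (subCK : C \subset K) (cardC : #|C| = j).
Implicit Types (s u : seq 'I_n) (x : 'I_n).

(* [vle] is the order of the v_i, and [Cseq] is the list [v_0; ...; v_{j-1}]. *)
Definition vle : rel 'I_n := relpre (vpos K C) leq.

Definition Cseq : seq 'I_n := sort vle (enum C).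

Lemma vle_trans : transitive vle.
Proof. by move=> y x z; apply: leq_trans. Qed.

Lemma vle_anti : antisymmetric vle.
Proof. by move=> x y; rewrite /vle /= -eqn_leq => /eqP /(vpos_inj subCK). Qed.

Lemma uniq_Cseq : uniq Cseq.
Proof. by rewrite sort_uniq enum_uniq. Qed.

Lemma mem_Cseq x : (x \in Cseq) = (x \in C).
Proof. by rewrite mem_sort mem_enum. Qed.

Lemma size_Cseq : size Cseq = j.
Proof. by rewrite size_sort -cardE cardC. Qed.

Lemma map_vpos_Cseq : map (vpos K C) Cseq = iota 0 j.
Proof.
have uCs : uniq (map (vpos K C) Cseq) by rewrite (map_inj_uniq (vpos_inj subCK)) uniq_Cseq.
have sub : {subset map (vpos K C) Cseq <= iota 0 j}.
  by move=> _ /mapP[x xC ->]; rewrite mem_iota /= -cardC vpos_ltC // -mem_Cseq.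
have sizeE : size (iota 0 j) = size (map (vpos K C) Cseq) by rewrite size_map size_Cseq size_iota.
have [_ E] := uniq_min_size uCs sub (eq_leq sizeE).
apply: (sorted_eq leq_trans anti_leq); rewrite ?iota_sorted ?uniq_perm ?iota_uniq //.
by rewrite sorted_map; apply: sort_sorted => x y; apply: leq_total.
Qed.

Lemma sorted_Cseq_cat u : all (fun x => x \notin C) u -> sorted vle u -> sorted vle (Cseq ++ u).
Proof.
move=> uC su; rewrite (sorted_pairwise vle_trans) pairwise_cat.
rewrite -!(sorted_pairwise vle_trans) su andbT.
rewrite sort_sorted ?andbT; last by move=> x y; apply: leq_total.
apply/allrelP => x y; rewrite mem_Cseq => xC /(allP uC) yC.
by rewrite /vle /= ltnW // (leq_trans _ (vpos_geC subCK yC)) // vpos_ltC.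
Qed.

Lemma uniq_Cseq_cat u : uniq u -> all (fun x => x \notin C) u -> uniq (Cseq ++ u).
Proof.
move=> uu uC; rewrite cat_uniq uniq_Cseq uu andbT /=.
by apply/hasPn => x /(allP uC); rewrite mem_Cseq.
Qed.

Lemma sorted_Cseq_prefix s : uniq s -> sorted leq (map (vpos K C) s) -> {subset C <= s} ->
  exists2 u, all (fun x => x \notin C) u & s = Cseq ++ u.
Proof.
move=> us ss C_s; rewrite sorted_map in ss.
exists [seq x <- s | x \notin C]; first exact: filter_all.
apply: (sorted_eq vle_trans vle_anti) => //.
  by rewrite sorted_Cseq_cat ?filter_all ?sorted_filter //; apply: vle_trans.
rewrite -{1}(perm_filterC (mem C) s) perm_cat2r uniq_perm ?filter_uniq ?uniq_Cseq //.
by move=> x; rewrite mem_filter mem_Cseq andb_idr //; apply: C_s.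
Qed.

End CanonicalOrder.

Section Copy.
Variables (n j k : nat) (G : {set {set 'I_n}}) (K C : {set 'I_n}) (R : zmodType).
Hypotheses (complexG : is_complex G) (KG : K \in G) (subCK : C \subset K).
Hypotheses (cardC : #|C| = j) (cardK : #|K| = k.+1).
Local Notation Cseq := (Cseq K C).
Local Notation fM := (fM G j k K C).
Local Notation sorted_vpos s := (sorted leq (map (vpos K C) s)).
Local Notation canonical s := [exists w in K :\: C, s == Cseq ++ [:: w]].
Implicit Types (s : seq 'I_n) (f : seq 'I_n -> R) (r : R).

Lemma osimplex_Cseq_cat m u : j + size u = m.+1 -> uniq u -> {subset u <= K :\: C} ->
  is_osimplex G m (Cseq ++ u).
Proof.
move=> sz uu uKC; have uC : all (fun x => x \notin C) u.
  by apply/allP => x /uKC /setDP[].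
apply: (osimplex_sub complexG KG); rewrite ?size_cat ?(size_Cseq K cardC) ?uniq_Cseq_cat //.
by move=> x; rewrite mem_cat mem_Cseq => /orP[/(subsetP subCK)|/uKC /setDP[]].
Qed.

Lemma sorted_osimplex_Cseq_cat1 s : is_osimplex G j s -> sorted_vpos s -> {subset C <= s} ->
  exists2 w, w \notin C & s = Cseq ++ [:: w].
Proof.
case/and3P=> /eqP sz us _ ss C_s; have [u uC Es] := sorted_Cseq_prefix subCK us ss C_s.
have : size u = 1 by move: sz; rewrite Es size_cat (size_Cseq K cardC); lia.
by case: u uC Es => [|w []] // /andP[wC _] Es _; exists w.
Qed.

Lemma fM_swap_next r s i : is_osimplex G j s -> i.+1 < size s ->
  fM r (swap_next i s) = (- fM r s)%R.
Proof.
move=> Hs Hi; rewrite /fM osimplex_swap_next Hs.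
have -> : sort leq (map (vpos K C) (swap_next i s)) = sort leq (map (vpos K C) s).
  apply/perm_sortP; rewrite ?perm_map ?perm_swap_next //.
  - exact: leq_total.
  - exact: leq_trans.
  - exact: anti_leq.
case: ifP => _; last by rewrite oppr0.
have uvs : uniq (map (vpos K C) s) by rewrite (map_inj_uniq (vpos_inj subCK)); case/and3P: Hs.
have Hi' : i.+1 < size (map (vpos K C) s) by rewrite size_map.
have := ninv_swap_next Hi'; rewrite map_swap_next.
have : nth 0 (map (vpos K C) s) i != nth 0 (map (vpos K C) s) i.+1.
  by rewrite nth_uniq ?ltn_eqF ?(ltnW Hi').
rewrite neq_ltn => /orP[lt|gt].
  by rewrite lt ltnNge (ltnW lt) /= addn0 addn1 => ->; rewrite mulrz_signS.
by rewrite gt ltnNge (ltnW gt) /= addn0 addn1 => <-; rewrite mulrz_signS opprK.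
Qed.

Lemma fM_Cseq_cat1 r w : w \in K :\: C -> fM r (Cseq ++ [:: w]) = r.
Proof.
move=> wKC; have /setDP[wK wC] := wKC.
rewrite /fM osimplex_Cseq_cat ?addn1 ?wKC // => [|x]; last by rewrite inE => /eqP->.
have ss : sorted_vpos (Cseq ++ [:: w]).
  by rewrite sorted_map; apply: sorted_Cseq_cat; rewrite /= ?wC.
rewrite (sorted_sort leq_trans ss) ninv_sorted // expr0 mulr1z map_cat (map_vpos_Cseq subCK cardC).
have -> : [forall t : 'I_j, nth 0 (iota 0 j ++ [:: vpos K C w]) t == t].
  by apply/forallP => t; rewrite nth_cat size_iota ltn_ord nth_iota.
have wj : j <= vpos K C w by rewrite -cardC (vpos_geC subCK).
have wk : vpos K C w <= k by rewrite -ltnS -cardK (vpos_ltK subCK).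
by rewrite nth_cat size_iota ltnn subnn /= wj wk.
Qed.

Lemma fM_sorted_neq0 r s : is_osimplex G j s -> sorted_vpos s -> fM r s != 0%R ->
  canonical s.
Proof.
move=> Hs ss; rewrite /fM Hs (sorted_sort leq_trans ss).
case: ifP => [/andP[/forallP first_j /andP[_ wk]] _|]; last by rewrite eqxx.
have C_s : {subset C <= s}.
  move=> c cC; have cj : vpos K C c < j by rewrite -cardC (vpos_ltC subCK).
  have /eqP /= E := first_j (Ordinal cj).
  rewrite -(mem_map (vpos_inj subCK)) -{1}E mem_nth // size_map.
  by case/and3P: Hs => /eqP -> _ _; apply: ltnW.
have [w wC Es] := sorted_osimplex_Cseq_cat1 Hs ss C_s.
apply/exists_inP; exists w; rewrite ?Es // inE wC -(vpos_ltK subCK) cardK ltnS.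
by move: wk; rewrite Es map_cat (map_vpos_Cseq subCK cardC) nth_cat size_iota ltnn subnn.
Qed.

Lemma sorted_flower_canonical s : is_osimplex G j s -> sorted_vpos s ->
  [set x in s] \in flower K C -> canonical s.
Proof.
move=> Hs ss /imsetP[w' w'KC Es].
have sE x : (x \in s) = (x \in C) || (x == w') by move/setP/(_ x): Es; rewrite !inE.
have C_s : {subset C <= s} by move=> c cC; rewrite sE cC.
have [w wC Es'] := sorted_osimplex_Cseq_cat1 Hs ss C_s.
apply/exists_inP; exists w; rewrite ?Es' //.
have : w \in s by rewrite Es' mem_cat mem_head orbT.
by rewrite sE (negbTE wC) => /eqP->.
Qed.

Lemma alternating_sum_del_Cseq_cat2 f x y : support_in f (flower K C) ->
  uniq (Cseq ++ [:: x; y]) ->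
  (\sum_(i < j.+2) f (del i (Cseq ++ [:: x; y])) *~ ((-1) ^+ i) =
   (f (Cseq ++ [:: y]) - f (Cseq ++ [:: x])) *~ ((-1) ^+ j))%R.
Proof.
move=> supp_f u2; rewrite 2!big_ord_recr /= big1 ?add0r => [|i _].
  have -> : del j (Cseq ++ [:: x; y]) = Cseq ++ [:: y].
    by rewrite -(size_Cseq K cardC) del_size_cat.
  have -> : del j.+1 (Cseq ++ [:: x; y]) = Cseq ++ [:: x].
    by rewrite -cat_rcons -(size_Cseq K cardC) -(size_rcons _ x) del_size_cat cats0 cats1.
  by rewrite mulrz_signS mulrzBl addrC.
suff -> : f (del i (Cseq ++ [:: x; y])) = 0%R by rewrite mul0rz.
apply/eqP/negPn/negP => /supp_f /imsetP[w _ E].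
have i_lt : i < size (Cseq ++ [:: x; y]) by rewrite size_cat (size_Cseq K cardC) ltn_addr.
have : nth x (Cseq ++ [:: x; y]) i \in [set z in del i (Cseq ++ [:: x; y])].
  by rewrite E !inE nth_cat (size_Cseq K cardC) ltn_ord -(mem_Cseq K) mem_nth ?(size_Cseq K cardC).
by rewrite inE (negbTE (nth_notin_del x u2 i_lt)).
Qed.

Lemma coboundary_Cseq_cat2 f x y : support_in f (flower K C) ->
  is_osimplex G j.+1 (Cseq ++ [:: x; y]) ->
  coboundary G j f (Cseq ++ [:: x; y]) =
  ((f (Cseq ++ [:: y]) - f (Cseq ++ [:: x])) *~ ((-1) ^+ j))%R.
Proof.
move=> supp_f s2; rewrite /coboundary s2 alternating_sum_del_Cseq_cat2 //.
by case/and3P: s2.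
Qed.

Lemma cocycle_eq_fM f w0 : w0 \in K :\: C -> is_cocycle G j f ->
  support_in f (flower K C) -> f =1 fM (f (Cseq ++ [:: w0])).
Proof.
move=> w0KC [cochain_f cocycle_f] supp_f.
have f_petal w : w \in K :\: C -> f (Cseq ++ [:: w]) = f (Cseq ++ [:: w0]).
  move=> wKC; have [->//|ww0] := eqVneq w w0.
  have s2 : is_osimplex G j.+1 (Cseq ++ [:: w0; w]).
    apply: osimplex_Cseq_cat; rewrite ?addn2 //= ?inE ?andbT 1?eq_sym //.
    by move=> x; rewrite !in_cons in_nil orbF => /orP[]/eqP->.
  move/eqP: (cocycle_f (Cseq ++ [:: w0; w])).
  by rewrite coboundary_Cseq_cat2 // mulrz_sign_eq0 subr_eq0 => /eqP.
move=> s; have [Hs|nHs] := boolP (is_osimplex G j s); last first.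
  by rewrite /fM (negbTE nHs); case: cochain_f => ->.
move: s Hs; apply: (alternating_eq_sorted (key := vpos K C)) => [i s|i s|i s|s Hs ss].
- exact: osimplex_swap_next.
- exact: cochain_swap_next.
- exact: fM_swap_next.
have [/exists_inP[w wKC /eqP->]|noncanonical] := boolP (canonical s).
  by rewrite fM_Cseq_cat1 // f_petal.
have f0 : f s = 0%R.
  apply/eqP/negPn/negP => /supp_f /(sorted_flower_canonical Hs ss).
  exact/negP.
have fM0 : fM (f (Cseq ++ [:: w0])) s = 0%R.
  apply/eqP/negPn/negP => /(fM_sorted_neq0 Hs ss).
  exact/negP.
by rewrite f0 fM0.
Qed.

Lemma fM_cocycle f r :
  (forall P sigma, P \in flower K C -> sigma \in G -> P \subset sigma ->
     #|sigma| = j.+2 -> sigma \subset K) ->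
  is_cochain G j f -> support_in f (flower K C) -> f =1 fM r -> is_cocycle G j f.
Proof.
move=> petal_in_K cochain_f supp_f f_fM; split=> // s.
have [Hs|nHs] := boolP (is_osimplex G j.+1 s); last by rewrite /coboundary (negbTE nHs).
move: s Hs; apply: (alternating_eq_sorted (key := vpos K C) (g := fun=> 0%R))
  => [i s|i s _|i s|s Hs ss].
- exact: osimplex_swap_next.
- exact: coboundary_swap_next.
- by rewrite oppr0.
have [/forallP faces0|] := boolP [forall l : 'I_j.+2, f (del l s) == 0%R].
  by rewrite /coboundary Hs big1 // => l _; rewrite (eqP (faces0 l)) mul0rz.
rewrite negb_forall => /existsP[l /supp_f petal_l].
have /and3P[/eqP sz us sG] := Hs.
have petal_s : [set x in del l s] \subset [set x in s].
  by apply/subsetP => x; rewrite !inE; apply: (mem_subseq (del_subseq l s)).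
have sK : [set x in s] \subset K.
  by apply: petal_in_K petal_l sG petal_s _; rewrite cardsE (card_uniqP us) sz.
have C_s : {subset C <= s}.
  move: petal_l petal_s => /imsetP[w _ ->] /subsetP petal_s c cC.
  by have := petal_s c; rewrite !inE cC => /(_ isT).
have [u uC Es] := sorted_Cseq_prefix subCK us ss C_s.
have : size u = 2 by move: sz; rewrite Es size_cat (size_Cseq K cardC); lia.
case: u uC Es => [|x [|y []]] // /and3P[xC yC _] Es _.
have inK z : z \in [:: x; y] -> z \in K :\: C.
  move=> zxy; have zK : z \in K by apply: (subsetP sK); rewrite inE Es mem_cat zxy orbT.
  by rewrite inE zK andbT; move: zxy; rewrite !in_cons in_nil orbF => /orP[]/eqP->.
rewrite Es coboundary_Cseq_cat2 -?Es // !f_fM !fM_Cseq_cat1 ?subrr ?mul0rz //; apply: inK.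
  by rewrite mem_head.
by rewrite !inE eqxx orbT.
Qed.

Lemma fM_not_coboundary f r w a : support_in f (flower K C) -> f =1 fM r -> r != 0%R ->
  0 < j -> w \in K :\: C -> a \notin K -> shell G j (C :|: [set w; a]) ->
  ~ is_coboundary G j f.
Proof.
move=> supp_f f_fM r0 j_gt0 wKC aK /andP[_ /forallP shell_faces] [g [_ f_cob]].
have /setDP[wK wC] := wKC.
have aC : a \notin C by apply: contra aK; apply: (subsetP subCK).
have wa : w != a by apply: contraNneq aK => <-.
set t := Cseq ++ [:: w; a].
have ut : uniq t by rewrite uniq_Cseq_cat //= ?inE ?wa ?wC ?aC.
have faces (i : 'I_j.+2) : is_osimplex G j (del i t).
  have ud : uniq (del i t) := subseq_uniq (del_subseq i t) ut.
  have sz : size (del i t) = j.+1 by rewrite size_del size_cat (size_Cseq K cardC) ?addn2.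
  rewrite /is_osimplex sz eqxx ud; apply: (implyP (shell_faces _)).
  rewrite cardsE (card_uniqP ud) sz eqxx andbT; apply/subsetP => z.
  by rewrite inE => /(mem_subseq (del_subseq i t)); rewrite mem_cat (mem_Cseq K) !inE.
have f_a : f (Cseq ++ [:: a]) = 0%R.
  apply/eqP/negPn/negP => /supp_f /imsetP[w' w'KC E]; apply: (negP aK).
  have : a \in C :|: [set w'] by rewrite -E inE mem_cat mem_head orbT.
  by case/setUP => [/(subsetP subCK) //|/set1P->]; case/setDP: w'KC.
have := @alternating_sum_coboundary_faces _ G _ g t j.-1; rewrite (prednK j_gt0).
move=> /(_ faces); under eq_bigr do rewrite -f_cob.
rewrite alternating_sum_del_Cseq_cat2 // f_a f_fM fM_Cseq_cat1 // sub0r.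
by move/eqP; rewrite mulrz_sign_eq0 oppr_eq0; apply/negP.
Qed.

End Copy.

Lemma fM0 n (G : {set {set 'I_n}}) j k K C (R : zmodType) :
  fM G j k K C (0 : R) =1 (fun=> 0%R).
Proof. by move=> s; rewrite /fM mul0rz; case: ifP => //; case: ifP. Qed.

Lemma setU1_card_eq (T : finType) (A B : {set T}) x :
  A \subset B -> x \in B -> x \notin A -> #|B| = #|A|.+1 -> A :|: [set x] = B.
Proof.
move=> AB xB xA cB; apply/eqP; rewrite eqEcard cB setUC cardsU1 xA leqnn andbT.
by apply/subsetP => y; rewrite !inE => /orP[/eqP->|/(subsetP AB)].
Qed.

Lemma copyM_spec n (G : {set {set 'I_n}}) j k K C : copyM G j k K C ->
  [/\ K \in G, #|K| = k.+1, C \subset K, #|C| = j &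
   forall P sigma, P \in flower K C -> sigma \in G -> P \subset sigma ->
     #|sigma| = j.+2 -> sigma \subset K].
Proof.
case=> [[_ [KG [cK [CK [cC petal_max]]]]]|[-> [KG [cK [K_max [CK [cC _]]]]]]].
  by split=> // P sigma HP sG Psigma _; apply: petal_max HP sG Psigma.
split=> // _ sigma /imsetP[w /setDP[wK wC] ->] sG wsigma csigma.
have EK : C :|: [set w] = K by apply: setU1_card_eq; rewrite ?cK ?cC.
by rewrite EK in wsigma; move: csigma; rewrite (K_max _ sG wsigma) cK; lia.
Qed.

Lemma copyMhat_shell n (G : {set {set 'I_n}}) j k K C w a : copyMhat G j k K C w a ->
  [/\ w \in K :\: C, a \notin K & shell G j (C :|: [set w; a])].
Proof.
case=> [[_ [_ [wKC [aK shell_wa]]]]|[-> [copy [wK [w_max [aK shell_Ka]]]]]] //.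
case: copy => [[]|[_ [_ [cK [_ [CK [cC C_first]]]]]]]; first by rewrite ltnn.
have wC : w \notin C.
  apply/negP => wC; have /set0Pn[x xKC] : K :\: C != set0.
    by rewrite -card_gt0 cardsD (setIidPr CK) cK cC subSnn.
  by have /setDP[xK _] := xKC; have := C_first _ _ wC xKC; have := w_max x xK; lia.
have EK : C :|: [set w] = K by apply: setU1_card_eq; rewrite ?cK ?cC.
by split; rewrite ?inE ?wC // setUA EK.
Qed.

Local Open Scope ring_scope.

Theorem proposition4p8 (n d j k : nat) (R : zmodType)
    (G : {set {set 'I_n}}) (K C : {set 'I_n}) (f : seq 'I_n -> R) :
  is_complex G ->
  (2 <= d)%N -> (1 <= j <= d.-1)%N -> (j <= k <= d)%N ->
  copyM G j k K C ->
  is_cochain G j f ->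
  support_in f (flower K C) ->
  (is_cocycle G j f <-> exists r : R, f =1 fM G j k K C r)
  /\
  ((exists w a, copyMhat G j k K C w a) ->
     (is_cocycle G j f /\ ~ is_coboundary G j f <->
      exists r : R, r != 0 /\ f =1 fM G j k K C r)).
Proof.
move=> complexG _ /andP[j_gt0 _] /andP[jk _] copy cochain_f supp_f.
have [KG cardK subCK cardC petal_in_K] := copyM_spec copy.
have cocycleP : is_cocycle G j f <-> exists r, f =1 fM G j k K C r.
  split=> [cocycle_f|[r f_fM]]; last exact: fM_cocycle f_fM.
  have /set0Pn[w0 w0KC] : K :\: C != set0.
    by rewrite -card_gt0 cardsD (setIidPr subCK) cardK cardC subn_gt0 ltnS.
  by exists (f (Cseq K C ++ [:: w0])); apply: cocycle_eq_fM.
split=> // -[w [a /copyMhat_shell[wKC aK shell_wa]]]; split.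
  case=> /cocycleP[r f_fM] not_cob; exists r; split=> //.
  by apply/eqP => r0; apply/not_cob/is_coboundary0 => s; rewrite f_fM r0 fM0.
case=> r [r0 f_fM]; split; first by apply/cocycleP; exists r.
exact: fM_not_coboundary f_fM r0 j_gt0 wKC aK shell_wa.
Qed.
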